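(* Let $H=\frac12(y_1^2+y_2^2)-(x_1^2+x_2^2)+(x_1^2+x_2^2)^2$ on $\mathbb{R}^4$ with symplectic form $dx_1\wedge dy_1+dx_2\wedge dy_2$. Introduce symplectic coordinates $(q_1,q_2,p_1,p_2)$ by first rescaling $x_{j}\to 2^{-1/4}x_{j}$, $y_{j}\to 2^{1/4}y_{j}$ ($j=1,2$), and then setting $x_j=\frac{1}{\sqrt2}(q_j-p_j)$, $y_j=\frac{1}{\sqrt2}(q_j+p_j)$. In these coordinates $H=\sqrt2\,J_1+\frac18\left(q_1^2+q_2^2+p_1^2+p_2^2-2J_1\right)^2$, where $J_1=q_1p_1+q_2p_2$ and $J_2=q_1p_2-q_2p_1$ (the latter being the angular momentum $x_1y_2-x_2y_1$). Then the Birkhoff normal form of $H$ at the focus-focus equilibrium $(0,0)$ is the function of $(J_1,J_2)$ $$\overline{H}=\sqrt2\,J_1+\frac14(3J_1^2+J_2^2)-\frac{\sqrt2}{32}J_1(17J_1^2+9J_2^2)+\frac{1}{256}(375J_1^4+258J_1^2J_2^2+11J_2^4)-\frac{\sqrt2}{4096}J_1(10689J_1^4+8910J_1^2J_2^2+909J_2^4)+O(J^6).$$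
   Context: The Birkhoff normal form here means: there is a near-identity symplectic change of variables (generated by Lie series in the Deprit formalism, with the quadratic part $H_2=\sqrt2 J_1$ fixed) after which the Hamiltonian, written in the new coordinates $(q,p)$, depends only on $J_1=q_1p_1+q_2p_2$ and $J_2=q_1p_2-q_2p_1$, i.e. Poisson commutes with $J_1$ and $J_2$. The normal form is unique for this normalization. $O(J^6)$ denotes terms homogeneous of degree at least $6$ in the phase space variables (degree at least $3$ in $(J_1,J_2)$ beyond those displayed). *)

(* multivariate polynomials (multinomials' mpoly) over a
   real closed field R (so that sqrt 2 and 2^(1/4) exist). *)
From mathcomp Require Import all_boot all_algebra.
From mathcomp Require Import mpoly.
Set Implicit Arguments. Unset Strict Implicit. Unset Printing Implicit Defensive.
Import GRing.Theory Num.Theory.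
Local Open Scope ring_scope.

Section BNF.
Variable R : rcfType.

Definition v0 : 'I_4 := @Ordinal 4 0 isT.
Definition v1 : 'I_4 := @Ordinal 4 1 isT.
Definition v2 : 'I_4 := @Ordinal 4 2 isT.
Definition v3 : 'I_4 := @Ordinal 4 3 isT.

(* In the (q,p) chart: X_0 = q1, X_1 = q2, X_2 = p1, X_3 = p2.
   In the original chart: X_0 = x1, X_1 = x2, X_2 = y1, X_3 = y2. *)
Definition q1 : {mpoly R[4]} := 'X_v0.
Definition q2 : {mpoly R[4]} := 'X_v1.
Definition p1 : {mpoly R[4]} := 'X_v2.
Definition p2 : {mpoly R[4]} := 'X_v3.

Definition sqrt2 : R := Num.sqrt 2.
Definition root4_2 : R := Num.sqrt (Num.sqrt 2).

Definition Hxy : {mpoly R[4]} :=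
  let x1 := 'X_v0 in let x2 := 'X_v1 in let y1 := 'X_v2 in let y2 := 'X_v3 in
  (2%:R^-1)%:MP * (y1 ^+ 2 + y2 ^+ 2) - (x1 ^+ 2 + x2 ^+ 2)
  + (x1 ^+ 2 + x2 ^+ 2) ^+ 2.

(* Coordinate change: x_j -> 2^(-1/4) x_j, y_j -> 2^(1/4) y_j, then
   x_j = (q_j - p_j)/sqrt2, y_j = (q_j + p_j)/sqrt2.  The old variables
   expressed in the new ones (x1, x2, y1, y2 in this order): *)
Definition chg : 4.-tuple {mpoly R[4]} :=
  [tuple (root4_2^-1 / sqrt2)%:MP * (q1 - p1);
         (root4_2^-1 / sqrt2)%:MP * (q2 - p2);
         (root4_2 / sqrt2)%:MP * (q1 + p1);
         (root4_2 / sqrt2)%:MP * (q2 + p2)].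

Definition J1 : {mpoly R[4]} := q1 * p1 + q2 * p2.
Definition J2 : {mpoly R[4]} := q1 * p2 - q2 * p1.

Definition Hqp : {mpoly R[4]} :=
  sqrt2%:MP * J1
  + (8%:R^-1)%:MP * (q1 ^+ 2 + q2 ^+ 2 + p1 ^+ 2 + p2 ^+ 2 - 2%:R%:MP * J1) ^+ 2.

Definition pbracket (f g : {mpoly R[4]}) : {mpoly R[4]} :=
  mderiv v0 f * mderiv v2 g - mderiv v2 f * mderiv v0 g
  + (mderiv v1 f * mderiv v3 g - mderiv v3 f * mderiv v1 g).

(* Truncated Lie series exp(L_W) H = sum_{k<N} 1/k! {..{H,W},..,W}
   (Deprit formalism: H composed with the time-one flow of W). *)
Definition lie_series (W H : {mpoly R[4]}) (N : nat) : {mpoly R[4]} :=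
  \sum_(k < N) (k`!%:R^-1) *: iter k (fun f => pbracket f W) H.

Definition ord_ge (d : nat) (p : {mpoly R[4]}) : Prop :=
  forall m : 'X_{1..4}, (mdeg m < d)%N -> p@_m = 0.

Definition Hbar : {mpoly R[4]} :=
  sqrt2%:MP * J1
  + (4%:R^-1)%:MP * (3%:R%:MP * J1 ^+ 2 + J2 ^+ 2)
  - (sqrt2 / 32%:R)%:MP * J1 * (17%:R%:MP * J1 ^+ 2 + 9%:R%:MP * J2 ^+ 2)
  + (256%:R^-1)%:MP * (375%:R%:MP * J1 ^+ 4 + 258%:R%:MP * J1 ^+ 2 * J2 ^+ 2
                        + 11%:R%:MP * J2 ^+ 4)
  - (sqrt2 / 4096%:R)%:MP * J1 * (10689%:R%:MP * J1 ^+ 4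
                        + 8910%:R%:MP * J1 ^+ 2 * J2 ^+ 2 + 909%:R%:MP * J2 ^+ 4).

End BNF.

From Stdlib Require Import ZArith QArith.
From HB Require Import structures.
From mathcomp Require Import all_boot all_algebra mpoly.
From mathcomp Require Import ssrZ zify ring.
From mathcomp.algebra_tactics Require Import common.
Set Implicit Arguments. Unset Strict Implicit. Unset Printing Implicit Defensive.
Import GRing.Theory Num.Theory.
Local Open Scope ring_scope.

(** In the new variables the two quadratic forms of H pull back to
    x1^2 + x2^2 = (sqrt2/4) (S - 2 J1) and y1^2 + y2^2 = (sqrt2/2) (S + 2 J1),
    where S = q1^2 + q2^2 + p1^2 + p2^2; this gives the formula for H in the
    (q,p) chart.

    For the normal form we exhibit the Deprit generator W, which turns out to
    be (q1^2 + q2^2 - p1^2 - p2^2) times a polynomial in S, J1 and J2, and check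
    that exp(L_W) H agrees with the displayed function up to order 12. Since W
    vanishes to order 3, bracketing with W raises the order of vanishing, so an
    error of order 12 in an iterated bracket stays of order 12 in the next one:
    all brackets may be computed modulo monomials of degree >= 12. That
    truncated computation is carried out by reflection, on sparse polynomials
    with coefficients in Q(sqrt 2). *)

(** * The coordinate change *)

Lemma sqrt2_sqr (R : rcfType) : sqrt2 R ^+ 2 = 2.
Proof. by rewrite sqr_sqrtr ?ler0n. Qed.

Lemma comp_mpolyM (n k : nat) (R : comRingType) (lq : n.-tuple {mpoly R[k]})
    (p q : {mpoly R[n]}) :
  (p * q) \mPo lq = (p \mPo lq) * (q \mPo lq).
Proof. exact: rmorphM. Qed.

Lemma comp_mpolyXn (n k : nat) (R : comRingType) (lq : n.-tuple {mpoly R[k]})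
    (p : {mpoly R[n]}) e :
  (p ^+ e) \mPo lq = (p \mPo lq) ^+ e.
Proof. exact: rmorphXn. Qed.

Definition sqnorm (R : rcfType) : {mpoly R[4]} :=
  q1 R ^+ 2 + q2 R ^+ 2 + p1 R ^+ 2 + p2 R ^+ 2.

Section CoordinateChange.
Variable R : rcfType.

Let u : {mpoly R[4]} := (sqrt2 R / 4)%:MP.

Lemma sqrt2_neq0 : sqrt2 R != 0.
Proof. by rewrite lt0r_neq0 // sqrtr_gt0 ltr0n. Qed.

Lemma root4_2_sqr : root4_2 R ^+ 2 = sqrt2 R.
Proof. by rewrite sqr_sqrtr ?sqrtr_ge0. Qed.

Lemma comp_chg_sqr (i : 'I_4) : ('X_i ^+ 2) \mPo chg R = (chg R)`_i ^+ 2.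
Proof. by rewrite comp_mpolyXn comp_mpolyXU. Qed.

Lemma comp_chg_x :
  ('X_v0 ^+ 2 + 'X_v1 ^+ 2) \mPo chg R = u * (sqnorm R - 2%:R%:MP * J1 R).
Proof.
have c2 : ((root4_2 R)^-1 / sqrt2 R) ^+ 2 = sqrt2 R / 4.
  by rewrite expr_div_n exprVn root4_2_sqr; field: (sqrt2_sqr R); rewrite sqrt2_neq0.
rewrite comp_mpolyD !comp_chg_sqr /= !exprMn -!rmorphXn c2 -mulrDr.
by rewrite /sqnorm /J1 /q1 /q2 /p1 /p2; congr (_ * _); ring.
Qed.

Lemma comp_chg_y :
  ('X_v2 ^+ 2 + 'X_v3 ^+ 2) \mPo chg R = 2%:R%:MP * (u * (sqnorm R + 2%:R%:MP * J1 R)).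
Proof.
have d2 : (root4_2 R / sqrt2 R) ^+ 2 = 2 * (sqrt2 R / 4).
  by rewrite expr_div_n root4_2_sqr; field: (sqrt2_sqr R); rewrite sqrt2_neq0.
rewrite comp_mpolyD !comp_chg_sqr /= !exprMn -!rmorphXn d2 rmorphM -mulrDr -mulrA.
by rewrite /sqnorm /J1 /q1 /q2 /p1 /p2; congr (_ * (_ * _)); ring.
Qed.

Lemma Hxy_chg : Hxy R \mPo chg R = Hqp R.
Proof.
have u2 : u ^+ 2 = (8%:R^-1)%:MP.
  by rewrite -rmorphXn expr_div_n sqrt2_sqr; congr _%:MP; field.
have u4 : 4%:R%:MP * u = (sqrt2 R)%:MP by rewrite -rmorphM; congr _%:MP; field.
rewrite /Hxy /= comp_mpolyD comp_mpolyB comp_mpolyM comp_mpolyXn comp_mpolyC.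
rewrite comp_chg_x comp_chg_y /Hqp -/(sqnorm R) [(2%:R^-1)%:MP * _]mulrA -rmorphM.
rewrite mulVf ?pnatr_eq0 // mul1r exprMn u2 -[(sqrt2 R)%:MP]u4; ring.
Qed.

End CoordinateChange.

(** * Arithmetic in Q(sqrt 2) *)

(** [QSqrt2 a b] stands for [a + b * sqrt 2]. *)
Record qsqrt2 := QSqrt2 { qs_rat : Q; qs_irr : Q }.

Lemma qsqrt2_comparable : comparable qsqrt2.
Proof.
rewrite /comparable /decidable; do 2!decide equality.
all: solve [exact: Pos.eq_dec | exact: Z.eq_dec].
Qed.

HB.instance Definition _ := comparableMixin qsqrt2_comparable.

Definition qs_add (x y : qsqrt2) : qsqrt2 :=
  QSqrt2 (Qred (qs_rat x + qs_rat y)) (Qred (qs_irr x + qs_irr y)).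

Definition qs_mul (x y : qsqrt2) : qsqrt2 :=
  QSqrt2 (Qred (qs_rat x * qs_rat y + 2 * (qs_irr x * qs_irr y)))
         (Qred (qs_rat x * qs_irr y + qs_irr x * qs_rat y)).

Definition qs_eq0 (x : qsqrt2) : bool :=
  Qeq_bool (qs_rat x) 0 && Qeq_bool (qs_irr x) 0.

Definition qs_nat (k : nat) : qsqrt2 := QSqrt2 (Z.of_nat k # 1) 0.
Definition qs_pos (k : positive) : qsqrt2 := QSqrt2 (Zpos k # 1) 0.
Definition qs_inv_pos (k : positive) : qsqrt2 := QSqrt2 (1 # k) 0.
Definition qs_sqrt2 : qsqrt2 := QSqrt2 0 1.
Definition qs_sqrt2_div (k : positive) : qsqrt2 := QSqrt2 0 (1 # k).

Fixpoint pos_fact (k : nat) : positive :=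
  if k is k'.+1 then (Pos.of_succ_nat k' * pos_fact k')%positive else 1%positive.

Definition qs_inv_fact (k : nat) : qsqrt2 := QSqrt2 (1 # pos_fact k) 0.

Section Qsqrt2Embedding.
Variable R : rcfType.

Definition qs2R (x : qsqrt2) : R := R_of_Q (qs_rat x) + R_of_Q (qs_irr x) * sqrt2 R.

Lemma qs2RE a b : qs2R (QSqrt2 a b) = R_of_Q a + R_of_Q b * sqrt2 R.
Proof. by []. Qed.

Lemma R_of_Q_Qeq (x y : Q) : Qeq x y -> R_of_Q x = R_of_Q y :> R.
Proof.
case: x y => [a p] [b q]; rewrite /Qeq /R_of_Q /= => eq_ab.
have pos_neq0 (r : positive) : (Pos.to_nat r)%:R != 0 :> R by rewrite pnatr_eq0; lia.
apply/eqP; rewrite eqr_div ?pos_neq0 // !pmulrn -!intrM.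
by apply/eqP; congr _%:~R; lia.
Qed.

Lemma R_of_Q_red (x : Q) : R_of_Q (Qred x) = R_of_Q x :> R.
Proof. exact/R_of_Q_Qeq/Qred_correct. Qed.

Lemma qs2R_add x y : qs2R (qs_add x y) = qs2R x + qs2R y.
Proof.
by rewrite /qs2R; cbn [qs_rat qs_irr qs_add]; rewrite !R_of_Q_red !R_of_Q_add; ring.
Qed.

Lemma qs2R_mul x y : qs2R (qs_mul x y) = qs2R x * qs2R y.
Proof.
rewrite /qs2R; cbn [qs_rat qs_irr qs_mul]; rewrite !R_of_Q_red !R_of_Q_add !R_of_Q_mul.
have -> : R_of_Q 2 = 2 :> R by rewrite /R_of_Q /= divr1.
by ring: (sqrt2_sqr R).
Qed.

Lemma qs2R_eq0 x : qs_eq0 x -> qs2R x = 0.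
Proof.
case/andP=> /Qeq_bool_eq/R_of_Q_Qeq r0 /Qeq_bool_eq/R_of_Q_Qeq i0.
by rewrite /qs2R r0 i0 R_of_Q0 mul0r addr0.
Qed.

Lemma qs2R_nat k : qs2R (qs_nat k) = k%:R.
Proof.
by rewrite qs2RE R_of_Q0 mul0r addr0 /R_of_Q /= divr1 (_ : int_of_Z _ = k) //; lia.
Qed.

Lemma qs2R_pos k : qs2R (qs_pos k) = (Pos.to_nat k)%:R.
Proof. by rewrite qs2RE R_of_Q0 mul0r addr0 /R_of_Q divr1. Qed.

Lemma qs2R_inv_pos k : qs2R (qs_inv_pos k) = (Pos.to_nat k)%:R^-1.
Proof. by rewrite qs2RE R_of_Q0 mul0r addr0 /R_of_Q mul1r. Qed.

Lemma qs2R_sqrt2 : qs2R qs_sqrt2 = sqrt2 R.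
Proof. by rewrite qs2RE R_of_Q0 R_of_Q1 add0r mul1r. Qed.

Lemma qs2R_sqrt2_div k : qs2R (qs_sqrt2_div k) = sqrt2 R / (Pos.to_nat k)%:R.
Proof. by rewrite qs2RE R_of_Q0 add0r /R_of_Q mul1r mulrC. Qed.

Lemma pos_factE k : Pos.to_nat (pos_fact k) = k`!.
Proof. by elim: k => //= k IH; rewrite factS -IH; lia. Qed.

Lemma qs2R_inv_fact k : qs2R (qs_inv_fact k) = k`!%:R^-1.
Proof. by rewrite qs2RE R_of_Q0 mul0r addr0 /R_of_Q /= pos_factE mul1r. Qed.

End Qsqrt2Embedding.

(** * Sparse polynomials *)

Fixpoint mono_add (s t : seq nat) : seq nat :=
  match s, t with
  | a :: s', b :: t' => (a + b)%N :: mono_add s' t'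
  | [::], _ => t
  | _, [::] => s
  end.

Definition mono_dec (i : nat) (s : seq nat) : seq nat := set_nth 0 s i (nth 0 s i).-1.

Fixpoint mono_trim (s : seq nat) : seq nat :=
  if s is a :: s' then
    let t := mono_trim s' in if (a == 0%N) && (t == [::]) then [::] else a :: t
  else [::].

Fixpoint mono_le (s t : seq nat) : bool :=
  match s, t with
  | a :: s', b :: t' => (a < b)%N || (a == b) && mono_le s' t'
  | [::], _ => true
  | _ :: _, [::] => false
  end.

Lemma nth_mono_add s t i : nth 0 (mono_add s t) i = (nth 0 s i + nth 0 t i)%N.
Proof. by elim: s t i => [|a s IH] [|b t] [|i] //=; rewrite addn0. Qed.

Lemma nth_mono_trim s i : nth 0 (mono_trim s) i = nth 0 s i.
Proof.
elim: s i => [|a s IH] i //=.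
case: ifP => [/andP[/eqP-> /eqP t_nil] | _]; last by case: i.
by case: i => [|i] //=; rewrite -IH t_nil nth_nil.
Qed.

Lemma sum_nth_take (s : seq nat) n : (\sum_(i < n) nth 0 s i)%N = sumn (take n s).
Proof.
elim: n s => [|n IH] [|a s]; rewrite ?big_ord0 //.
  by rewrite big1 // => i _; rewrite nth_nil.
by rewrite big_ord_recl IH.
Qed.

Section SeqMonomials.
Variable n : nat.

Definition mnm_of_seq (s : seq nat) : 'X_{1..n} := [multinom nth 0 s i | i < n].

Lemma mnm_of_seqE s i : mnm_of_seq s i = nth 0 s i.
Proof. exact: mnmE. Qed.

Lemma mnm_of_seq_nil : mnm_of_seq [::] = 0%MM.
Proof. by apply/mnmP => i; rewrite mnm_of_seqE mnm0E nth_nil. Qed.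

Lemma mnm_of_seq_trim s : mnm_of_seq (mono_trim s) = mnm_of_seq s.
Proof. by apply/mnmP => i; rewrite !mnm_of_seqE nth_mono_trim. Qed.

Lemma mnm_of_seq_add s t : mnm_of_seq (mono_add s t) = (mnm_of_seq s + mnm_of_seq t)%MM.
Proof. by apply/mnmP => i; rewrite mnmDE !mnm_of_seqE nth_mono_add. Qed.

Lemma mnm_of_seq_dec (i : 'I_n) s : mnm_of_seq (mono_dec i s) = (mnm_of_seq s - U_(i))%MM.
Proof.
apply/mnmP => j; rewrite mnmBE mnm1E !mnm_of_seqE nth_set_nth /=.
have [-> | ne] := eqVneq i j; first by rewrite eqxx subn1.
by rewrite subn0 ifN // eq_sym.
Qed.

Lemma mnm_of_seq_unit (i : 'I_n) : mnm_of_seq (rcons (nseq i 0) 1) = U_(i)%MM.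
Proof.
apply/mnmP => j; rewrite mnm1E mnm_of_seqE nth_rcons size_nseq nth_nseq if_same.
have [<- | ne] := eqVneq i j; first by rewrite ltnn eqxx.
by rewrite val_eqE eq_sym (negbTE ne) if_same.
Qed.

Lemma mdeg_mnm_of_seq s : mdeg (mnm_of_seq s) = sumn (take n s).
Proof.
by rewrite mdegE -sum_nth_take; apply: eq_bigr => i _; rewrite mnm_of_seqE.
Qed.

End SeqMonomials.

(** A sparse polynomial is a list of terms [(s, c)] standing for the monomial
    with exponent [nth 0 s i] in the [i]-th variable, with coefficient [c];
    a monomial may occur several times. *)
Definition spoly := seq (seq nat * qsqrt2).

Definition sp_const (c : qsqrt2) : spoly := [:: ([::], c)].
Definition sp_X (i : nat) : spoly := [:: (rcons (nseq i 0) 1, qs_nat 1)].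
Definition sp_scale (c : qsqrt2) (p : spoly) : spoly := [seq (x.1, qs_mul c x.2) | x <- p].
Definition sp_opp (p : spoly) : spoly := sp_scale (QSqrt2 (-1) 0) p.
Definition sp_mul (p q : spoly) : spoly :=
  [seq (mono_add x.1 y.1, qs_mul x.2 y.2) | x <- p, y <- q].
Definition sp_pow (p : spoly) (k : nat) : spoly := iter k (sp_mul p) (sp_const (qs_nat 1)).
Definition sp_deriv (i : nat) (p : spoly) : spoly :=
  [seq (mono_dec i x.1, qs_mul (qs_nat (nth 0 x.1 i)) x.2) | x <- p].
Definition sp_trunc (n d : nat) (p : spoly) : spoly :=
  [seq x <- p | (sumn (take n x.1) < d)%N].

Definition sp_push (x : seq nat * qsqrt2) (p : spoly) : spoly :=
  if p is y :: p' then
    if x.1 == y.1 then (x.1, qs_add x.2 y.2) :: p' else x :: p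
  else [:: x].

(** Any sorting relation would do for soundness; trimming trailing zero
    exponents and sorting only serve to make equal monomials adjacent, so that
    [sp_push] merges them. *)
Definition sp_norm (p : spoly) : spoly :=
  let p := [seq (mono_trim x.1, x.2) | x <- p] in
  [seq x <- foldr sp_push [::] (sort (fun x y => mono_le x.1 y.1) p) | ~~ qs_eq0 x.2].

Section SparseInterpretation.
Context {R : rcfType} {n : nat}.

Definition sp2mp (p : spoly) : {mpoly R[n]} :=
  \sum_(x <- p) qs2R R x.2 *: 'X_[mnm_of_seq n x.1].

Lemma sp2mp_cons x p : sp2mp (x :: p) = qs2R R x.2 *: 'X_[mnm_of_seq n x.1] + sp2mp p.
Proof. exact: big_cons. Qed.

Lemma sp2mp_cat p q : sp2mp (p ++ q) = sp2mp p + sp2mp q.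
Proof. exact: big_cat. Qed.

Lemma sp2mp_flatten (ps : seq spoly) : sp2mp (flatten ps) = \sum_(p <- ps) sp2mp p.
Proof. exact: big_flatten. Qed.

Lemma sp2mp_const c : sp2mp (sp_const c) = (qs2R R c)%:MP.
Proof. by rewrite /sp2mp big_seq1 mnm_of_seq_nil mpolyX0 alg_mpolyC. Qed.

Lemma sp2mp_X (i : 'I_n) : sp2mp (sp_X i) = 'X_i.
Proof. by rewrite /sp2mp big_seq1 mnm_of_seq_unit qs2R_nat scale1r. Qed.

Lemma sp2mp_scale c p : sp2mp (sp_scale c p) = qs2R R c *: sp2mp p.
Proof.
rewrite /sp2mp big_map scaler_sumr; apply: eq_bigr => x _.
by rewrite qs2R_mul scalerA.
Qed.

Lemma sp2mp_opp p : sp2mp (sp_opp p) = - sp2mp p.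
Proof.
rewrite sp2mp_scale qs2RE R_of_Q0 mul0r addr0.
by rewrite (R_of_Q_opp _ 1) R_of_Q1 scaleN1r.
Qed.

Lemma sp2mp_mul p q : sp2mp (sp_mul p q) = sp2mp p * sp2mp q.
Proof.
rewrite /sp2mp big_allpairs_dep mulr_suml; apply: eq_bigr => x _.
rewrite mulr_sumr; apply: eq_bigr => y _ /=.
by rewrite qs2R_mul mnm_of_seq_add mpolyXD -scalerAl -scalerAr scalerA.
Qed.

Lemma sp2mp_pow p k : sp2mp (sp_pow p k) = sp2mp p ^+ k.
Proof.
elim: k => [|k IH]; first by rewrite sp2mp_const qs2R_nat.
by rewrite exprS -IH /sp_pow iterS sp2mp_mul.
Qed.

Lemma sp2mp_deriv (i : 'I_n) p : sp2mp (sp_deriv i p) = mderiv i (sp2mp p).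
Proof.
rewrite /sp2mp big_map raddf_sum; apply: eq_bigr => x _ /=.
rewrite mderivZ mderivX mnm_of_seqE mnm_of_seq_dec qs2R_mul qs2R_nat.
by rewrite scalerA mulrC.
Qed.

Lemma sp2mp_push x p : sp2mp (sp_push x p) = sp2mp (x :: p).
Proof.
case: p => [|y p] //=; case: eqP => [eq_xy|_] //.
by rewrite !sp2mp_cons qs2R_add scalerDl eq_xy addrA.
Qed.

Lemma sp2mp_filter_nz p : sp2mp [seq x <- p | ~~ qs_eq0 x.2] = sp2mp p.
Proof.
rewrite /sp2mp big_filter big_mkcond; apply: eq_bigr => x _.
by case: ifPn => // /negPn /qs2R_eq0 ->; rewrite scale0r.
Qed.

Lemma sp2mp_norm p : sp2mp (sp_norm p) = sp2mp p.
Proof.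
rewrite /sp_norm sp2mp_filter_nz.
have -> q : sp2mp (foldr sp_push [::] q) = sp2mp q.
  by elim: q => //= x q IH; rewrite sp2mp_push !sp2mp_cons IH.
rewrite /sp2mp (perm_big _ (permEl (perm_sort _ _))) big_map.
by apply: eq_bigr => x _; rewrite mnm_of_seq_trim.
Qed.

End SparseInterpretation.

(** * Order of vanishing at the origin *)

Section Order.
Variable R : rcfType.
Implicit Types (f g : {mpoly R[4]}) (p : spoly).

Lemma ord_ge0 d : ord_ge d (0 : {mpoly R[4]}).
Proof. by move=> m _; rewrite mcoeff0. Qed.

Lemma ord_geD d f g : ord_ge d f -> ord_ge d g -> ord_ge d (f + g).
Proof. by move=> ord_f ord_g m lt_md; rewrite mcoeffD ord_f ?ord_g ?addr0. Qed.

Lemma ord_geN d f : ord_ge d f -> ord_ge d (- f).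
Proof. by move=> ord_f m lt_md; rewrite mcoeffN ord_f ?oppr0. Qed.

Lemma ord_geZ d c f : ord_ge d f -> ord_ge d (c *: f).
Proof. by move=> ord_f m lt_md; rewrite mcoeffZ ord_f ?mulr0. Qed.

Lemma ord_geW d e f : (e <= d)%N -> ord_ge d f -> ord_ge e f.
Proof. by move=> le_ed ord_f m lt_me; apply/ord_f/leq_trans/le_ed. Qed.

Lemma ord_geX m : ord_ge (mdeg m) ('X_[m] : {mpoly R[4]}).
Proof. by move=> k lt_k; rewrite mcoeffX; case: eqP lt_k => // ->; rewrite ltnn. Qed.

Lemma ord_geM a b f g : ord_ge a f -> ord_ge b g -> ord_ge (a + b) (f * g).
Proof.
move=> ord_f ord_g m lt_m; rewrite mcoeffM big1 // => k /eqP m_eq.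
have : (mdeg k.1 + mdeg k.2 < a + b)%N by rewrite -mdegD -m_eq.
case: (ltnP (mdeg k.1) a) => [/ord_f -> | le_a]; first by rewrite mul0r.
move=> lt_sum; rewrite ord_g ?mulr0 // -(ltn_add2l (mdeg k.1)).
by apply: leq_trans lt_sum _; rewrite leq_add2r.
Qed.

Lemma ord_ge_mderiv d (i : 'I_4) f : ord_ge d f -> ord_ge d.-1 (mderiv i f).
Proof.
move=> ord_f m lt_m; rewrite mcoeff_mderiv ord_f ?mul0rn //.
by rewrite mdegD mdeg1 addn1; case: d lt_m {ord_f}.
Qed.

Lemma pbracketBl f g (k : {mpoly R[4]}) : pbracket (f - g) k = pbracket f k - pbracket g k.
Proof. by rewrite /pbracket !mderivB; ring. Qed.

Lemma ord_ge_pbracket a b f g :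
  ord_ge a f -> ord_ge b g -> ord_ge (a.-1 + b.-1) (pbracket f g).
Proof.
move=> ord_f ord_g.
have ord_term i j : ord_ge (a.-1 + b.-1) (mderiv i f * mderiv j g).
  exact: ord_geM (ord_ge_mderiv _ ord_f) (ord_ge_mderiv _ ord_g).
by rewrite /pbracket; do 2![apply: ord_geD]; rewrite ?ord_term //; apply: ord_geN.
Qed.

Lemma ord_ge_sub_sp_trunc d p :
  ord_ge d (sp2mp p - sp2mp (sp_trunc 4 d p) : {mpoly R[4]}).
Proof.
rewrite /sp2mp big_filter [X in X - _](bigID (fun x => (sumn (take 4 x.1) < d)%N)) /=.
rewrite addrAC subrr add0r.
apply: big_ind => [|f g|x]; [exact: ord_ge0 | exact: ord_geD |].
rewrite -leqNgt -mdeg_mnm_of_seq => deg_x.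
exact/ord_geZ/(ord_geW deg_x)/ord_geX.
Qed.

Lemma ord_ge_sp_trunc_nil d p :
  sp_norm (sp_trunc 4 d p) = [::] -> ord_ge d (sp2mp p : {mpoly R[4]}).
Proof.
move=> trunc_nil; have := @ord_ge_sub_sp_trunc d p.
by rewrite -[sp2mp (sp_trunc _ _ _)]sp2mp_norm trunc_nil [sp2mp [::]]big_nil subr0.
Qed.

End Order.

(** * Truncated Lie series *)

Definition sp_pbracket (p w : spoly) : spoly :=
  sp_mul (sp_deriv v0 p) (sp_deriv v2 w) ++ sp_opp (sp_mul (sp_deriv v2 p) (sp_deriv v0 w))
  ++ (sp_mul (sp_deriv v1 p) (sp_deriv v3 w) ++ sp_opp (sp_mul (sp_deriv v3 p) (sp_deriv v1 w))).

Definition sp_pbracket_trunc (d : nat) (w p : spoly) : spoly :=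
  sp_norm (sp_trunc 4 d (sp_pbracket p w)).

Definition sp_lie_series (d N : nat) (w h : spoly) : spoly :=
  let h := sp_norm h in
  let T := traject (sp_pbracket_trunc d (sp_norm w)) h N in
  flatten [seq sp_scale (qs_inv_fact k) (nth h T k) | k <- index_iota 0 N].

Section TruncatedLieSeries.
Variable R : rcfType.
Implicit Types (f : {mpoly R[4]}) (p w h : spoly).

Lemma sp2mp_pbracket p w :
  sp2mp (sp_pbracket p w) = pbracket (sp2mp p) (sp2mp w) :> {mpoly R[4]}.
Proof. by rewrite !(sp2mp_cat, sp2mp_opp, sp2mp_mul, sp2mp_deriv) addrA. Qed.

Lemma sp_pbracket_trunc_sound d w p f :
  ord_ge 3 (sp2mp w : {mpoly R[4]}) -> ord_ge d (f - sp2mp p) ->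
  ord_ge d (pbracket f (sp2mp w) - sp2mp (sp_pbracket_trunc d w p)).
Proof.
move=> ord_w ord_fp.
rewrite sp2mp_norm -(subrK (pbracket (sp2mp p) (sp2mp w)) (pbracket f _)).
rewrite -pbracketBl -addrA.
apply: ord_geD; first by apply: ord_geW _ (ord_ge_pbracket ord_fp ord_w); lia.
by rewrite -sp2mp_pbracket; exact: ord_ge_sub_sp_trunc.
Qed.

Lemma sp_lie_series_sound d N w h : ord_ge 3 (sp2mp w : {mpoly R[4]}) ->
  ord_ge d (lie_series (sp2mp w) (sp2mp h) N - sp2mp (sp_lie_series d N w h) : {mpoly R[4]}).
Proof.
rewrite -(sp2mp_norm w) -[in lie_series _ _ _](sp2mp_norm h) /sp_lie_series /=.
move: (sp_norm w) (sp_norm h) => {}w {}h ord_w.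
have iter_sound k : ord_ge d (iter k (fun f => pbracket f (sp2mp w)) (sp2mp h)
                             - sp2mp (iter k (sp_pbracket_trunc d w) h)).
  elim: k => [|k IH]; first by rewrite subrr; exact: ord_ge0.
  by rewrite !iterS; exact: sp_pbracket_trunc_sound.
rewrite sp2mp_flatten big_map big_mkord /lie_series -sumrB.
apply: big_ind => [|f g|k _]; [exact: ord_ge0 | exact: ord_geD |].
by rewrite sp2mp_scale qs2R_inv_fact nth_traject // -scalerBr; apply/ord_geZ/iter_sound.
Qed.

End TruncatedLieSeries.

(** * The normal form *)

Definition sp_J1 : spoly := sp_mul (sp_X v0) (sp_X v2) ++ sp_mul (sp_X v1) (sp_X v3).
Definition sp_J2 : spoly := sp_mul (sp_X v0) (sp_X v3) ++ sp_opp (sp_mul (sp_X v1) (sp_X v2)).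
Definition sp_sqnorm : spoly :=
  ((sp_pow (sp_X v0) 2 ++ sp_pow (sp_X v1) 2) ++ sp_pow (sp_X v2) 2) ++ sp_pow (sp_X v3) 2.
Definition sp_Hqp : spoly :=
  sp_mul (sp_const qs_sqrt2) sp_J1
  ++ sp_mul (sp_const (qs_inv_pos 8))
       (sp_pow (sp_sqnorm ++ sp_opp (sp_mul (sp_const (qs_pos 2)) sp_J1)) 2).

Definition sp_Hbar : spoly :=
  (((sp_mul (sp_const qs_sqrt2) sp_J1
  ++ sp_mul (sp_const (qs_inv_pos 4))
       (sp_mul (sp_const (qs_pos 3)) (sp_pow sp_J1 2) ++ sp_pow sp_J2 2))
  ++ sp_opp (sp_mul (sp_mul (sp_const (qs_sqrt2_div 32)) sp_J1)
       (sp_mul (sp_const (qs_pos 17)) (sp_pow sp_J1 2)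
        ++ sp_mul (sp_const (qs_pos 9)) (sp_pow sp_J2 2))))
  ++ sp_mul (sp_const (qs_inv_pos 256))
       ((sp_mul (sp_const (qs_pos 375)) (sp_pow sp_J1 4)
         ++ sp_mul (sp_mul (sp_const (qs_pos 258)) (sp_pow sp_J1 2)) (sp_pow sp_J2 2))
        ++ sp_mul (sp_const (qs_pos 11)) (sp_pow sp_J2 4)))
  ++ sp_opp (sp_mul (sp_mul (sp_const (qs_sqrt2_div 4096)) sp_J1)
       ((sp_mul (sp_const (qs_pos 10689)) (sp_pow sp_J1 4)
         ++ sp_mul (sp_mul (sp_const (qs_pos 8910)) (sp_pow sp_J1 2)) (sp_pow sp_J2 2))
        ++ sp_mul (sp_const (qs_pos 909)) (sp_pow sp_J2 4))).

Section Reification.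
Variable R : rcfType.

Lemma sp2mp_J1 : sp2mp sp_J1 = J1 R.
Proof. by rewrite /sp_J1 !(sp2mp_X, sp2mp_mul, sp2mp_cat). Qed.

Lemma sp2mp_J2 : sp2mp sp_J2 = J2 R.
Proof. by rewrite /sp_J2 !(sp2mp_X, sp2mp_mul, sp2mp_opp, sp2mp_cat). Qed.

Lemma sp2mp_sqnorm : sp2mp sp_sqnorm = sqnorm R.
Proof. by rewrite /sp_sqnorm !(sp2mp_X, sp2mp_pow, sp2mp_cat). Qed.

Lemma sp2mp_Hqp : sp2mp sp_Hqp = Hqp R.
Proof.
rewrite /sp_Hqp.
rewrite !(sp2mp_J1, sp2mp_sqnorm, sp2mp_const, sp2mp_pow, sp2mp_mul, sp2mp_opp, sp2mp_cat).
by rewrite qs2R_pos qs2R_sqrt2 qs2R_inv_pos.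
Qed.

Lemma sp2mp_Hbar : sp2mp sp_Hbar = Hbar R.
Proof.
rewrite /sp_Hbar.
rewrite !(sp2mp_J1, sp2mp_J2, sp2mp_const, sp2mp_pow, sp2mp_mul, sp2mp_opp, sp2mp_cat).
by rewrite !qs2R_pos qs2R_sqrt2 !qs2R_inv_pos !qs2R_sqrt2_div.
Qed.

End Reification.

Definition sp_sqdiff : spoly :=
  (sp_pow (sp_X v0) 2 ++ sp_pow (sp_X v1) 2) ++ sp_opp (sp_pow (sp_X v2) 2 ++ sp_pow (sp_X v3) 2).

Definition sp_inv_mono (c : Z) (a b e : nat) : spoly :=
  sp_mul (sp_const (QSqrt2 (c # 1) 0))
    (sp_mul (sp_mul (sp_pow sp_sqnorm a) (sp_pow sp_J1 b)) (sp_pow sp_J2 e)).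

(** The Deprit generator, obtained by solving the homological equations
    degree by degree (degrees 4, 6, 8, 10); each homogeneous piece turns out to
    be divisible by q1^2 + q2^2 - p1^2 - p2^2. *)
Definition sp_generator : spoly :=
  sp_mul sp_sqdiff (flatten [::
    sp_mul (sp_const (qs_sqrt2_div 64)) (flatten [::
      sp_inv_mono 1 1 0 0; sp_inv_mono (-8) 0 1 0]);
    sp_mul (sp_const (qs_inv_pos 384)) (flatten [::
      sp_inv_mono (-1) 2 0 0; sp_inv_mono (-9) 1 1 0;
      sp_inv_mono 100 0 2 0; sp_inv_mono 10 0 0 2]);
    sp_mul (sp_const (qs_sqrt2_div 8192)) (flatten [::
      sp_inv_mono (-3) 3 0 0; sp_inv_mono 92 2 1 0; sp_inv_mono 142 1 2 0;
      sp_inv_mono 30 1 0 2; sp_inv_mono (-3472) 0 3 0; sp_inv_mono (-792) 0 1 2]);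
    sp_mul (sp_const (qs_inv_pos 196608)) (flatten [::
      sp_inv_mono 56 4 0 0; sp_inv_mono 291 3 1 0; sp_inv_mono (-14352) 2 2 0;
      sp_inv_mono (-896) 2 0 2; sp_inv_mono 4502 1 3 0; sp_inv_mono (-3434) 1 1 2;
      sp_inv_mono 330912 0 4 0; sp_inv_mono 121008 0 2 2; sp_inv_mono 3664 0 0 4])]).

Lemma ord_ge_generator (R : rcfType) : ord_ge 3 (sp2mp sp_generator : {mpoly R[4]}).
Proof. by apply: ord_ge_sp_trunc_nil; vm_compute. Qed.

Theorem theorem3 (R : rcfType) :
  Hxy R \mPo chg R = Hqp R /\
  exists W : {mpoly R[4]},
    ord_ge 3 W /\ ord_ge 12 (lie_series W (Hqp R) 12 - Hbar R).
Proof.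
split; first exact: Hxy_chg.
exists (sp2mp sp_generator); split; first exact: ord_ge_generator.
set L := sp_lie_series 12 12 sp_generator sp_Hqp.
rewrite -sp2mp_Hqp -sp2mp_Hbar -(subrK (sp2mp L) (lie_series _ _ _)) -addrA.
apply: ord_geD; first exact/sp_lie_series_sound/ord_ge_generator.
rewrite -sp2mp_opp -sp2mp_cat; apply: ord_ge_sp_trunc_nil.
by vm_compute.
Qed.
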